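(* Let $(G,X,\alpha)$ be a $G$-Tychonoff space and $\mathcal U$ an equiuniformity on $X$. Then there exist a $G$-Tychonoff space $(H,X,\gamma)$ for which $\mathcal U$ is an equiuniformity, with $$\chi(H)\le w(\mathcal U),\quad \mathrm{ib}(H)\le\mathrm{ib}(G),\quad w(H)\le w(\mathcal U)\cdot\mathrm{ib}(G),$$ and an equivariant pair of maps $(\varphi,\mathrm{id}):(G,X,\alpha)\to(H,X,\gamma)$ with $\varphi$ an epimorphism.
   Context: All spaces are Tychonoff and all maps continuous. A $G$-space $(G,X,\alpha)$ is a topological group with a continuous action on $X$; it is $G$-Tychonoff if some compactification of $X$ carries a continuous $G$-action extending $\alpha$. Uniformities are families of open covers; $w(\mathcal U)$ is the least cardinality of a base. An equiuniformity is a uniformity which is saturated ($gu\in\mathcal U$ for all $g\in G,u\in\mathcal U$) and bounded (for each $u\in\mathcal U$ there are a neighborhood $O$ of the unit and $v\in\mathcal U$ with $\{OV:V\in v\}$ refining $u$). An equivariant pair $(\varphi,\mathrm{id})$ is a continuous homomorphism $\varphi:G\to H$ with $\alpha(g,x)=\gamma(\varphi(g),x)$. $\mathrm{ib}(G)$ is the least infinite cardinal $\tau$ such that for each neighborhood $U$ of the unit there is $A\subset G$, $|A|\le\tau$, with $AU=G$. *)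

From HB Require Import structures.
From mathcomp Require Import all_boot all_order all_algebra.
From mathcomp Require Import all_classical all_reals topology.
From mathcomp Require Import Rstruct Rstruct_topology.
Set Implicit Arguments. Unset Strict Implicit. Unset Printing Implicit Defensive.
Local Open Scope classical_set_scope.

Definition tychonoff (X : topologicalType) : Prop :=
  accessible_space X /\
  forall (x : X) (B : set X), closed B -> ~ B x ->
    exists f : X -> Rdefinitions.R,
      continuous f /\ f x = 0%R /\ (forall y, B y -> f y = 1%R).

(* (Hausdorff = Tychonoff) topological group with operations mul, inv, unit e. *)
Definition is_topgroup (G : topologicalType) (mul : G -> G -> G) (inv : G -> G)
  (e : G) : Prop :=
  [/\ (forall a b c, mul a (mul b c) = mul (mul a b) c),
      (forall a, mul e a = a),
      (forall a, mul (inv a) a = e) &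
      [/\ continuous (fun p : G * G => mul p.1 p.2),
      continuous inv & tychonoff G]].

Definition is_action (G : topologicalType) (mul : G -> G -> G) (e : G)
  (X : topologicalType) (alpha : G -> X -> X) : Prop :=
  [/\ (forall x, alpha e x = x),
      (forall g h x, alpha (mul g h) x = alpha g (alpha h x)) &
      continuous (fun p : G * X => alpha p.1 p.2)].

Definition G_space (G : topologicalType) mul inv (e : G)
  (X : topologicalType) (alpha : G -> X -> X) : Prop :=
  [/\ is_topgroup mul inv e, tychonoff X & is_action mul e alpha].

Definition compactification (X K : topologicalType) (j : X -> K) : Prop :=
  [/\ hausdorff_space K, compact [set: K], continuous j, injective j &
   [/\ (forall U : set X, open U -> exists V : set K, open V /\ j @` U = range j `&` V)
    & dense (range j)]].

Definition G_tychonoff (G : topologicalType) mul inv (e : G)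
  (X : topologicalType) (alpha : G -> X -> X) : Prop :=
  G_space mul inv e alpha /\
  exists (K : topologicalType) (j : X -> K) (beta : G -> K -> K),
    [/\ compactification j, is_action mul e beta &
        forall g x, beta g (j x) = j (alpha g x)].

Definition open_cover (X : topologicalType) (u : set (set X)) : Prop :=
  (forall V, u V -> open V) /\ (forall x, exists2 V, u V & V x).

Definition refines (X : Type) (u v : set (set X)) : Prop :=
  forall V, u V -> exists2 W, v W & V `<=` W.

Definition star (X : Type) (A : set X) (u : set (set X)) : set X :=
  [set y | exists V, [/\ u V, V `&` A !=set0 & V y]].

Definition star_refines (X : Type) (v u : set (set X)) : Prop :=
  forall V, v V -> exists2 W, u W & star V v `<=` W.

Definition covering_uniformity (X : topologicalType) (U : set (set (set X))) : Prop :=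
  [/\ U !=set0,
      (forall u, U u -> open_cover u),
      (forall u v, U u -> open_cover v -> refines u v -> U v) &
   [/\
      (forall u v, U u -> U v -> exists2 w, U w & refines w u /\ refines w v),
      (forall u, U u -> exists2 v, U v & star_refines v u) &
      (forall (x : X) (O : set X), nbhs x O ->
         exists2 u, U u & star [set x] u `<=` O)]].

Definition is_ubase (X : Type) (U B : set (set (set X))) : Prop :=
  B `<=` U /\ forall u, U u -> exists2 v, B v & refines v u.

Definition act_set (G X : Type) (alpha : G -> X -> X) (O : set G) (V : set X) : set X :=
  [set z | exists g y, [/\ O g, V y & z = alpha g y]].

Definition equiuniformity (G : topologicalType) (e : G) (X : topologicalType)
  (alpha : G -> X -> X) (U : set (set (set X))) : Prop :=
  [/\ covering_uniformity U,
      (forall g u, U u -> U [set alpha g @` V | V in u]) &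
      (forall u, U u -> exists O v, [/\ nbhs e O, U v &
          refines [set act_set alpha O V | V in v] u])].

Definition is_local_base (T : topologicalType) (x : T) (L : set (set T)) : Prop :=
  (forall O, L O -> open_nbhs x O) /\
  (forall N, nbhs x N -> exists2 O, L O & O `<=` N).

Definition is_top_base (T : topologicalType) (BB : set (set T)) : Prop :=
  (forall O, BB O -> open O) /\
  (forall W, open W -> forall x, W x -> exists2 O, BB O & O x /\ O `<=` W).

(* G is |S|-narrow: for every neighbourhood N of e there is A with |A| <= |S|
   and A N = G.  For S infinite, this holds iff ib(G) <= |S|. *)
Definition narrow (G : topologicalType) (mul : G -> G -> G) (e : G)
  (I : Type) (S : set I) : Prop :=
  forall N, nbhs e N -> exists A : set G,
    (A #<= S)%card /\ forall g, exists a n, [/\ A a, N n & g = mul a n].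

From Pilot Require Import Defs.
From HB Require Import structures.
From mathcomp Require Import all_boot all_order all_algebra.
From mathcomp Require Import all_classical all_reals topology normedtype.
From mathcomp Require Import Rstruct Rstruct_topology lra.
Set Implicit Arguments. Unset Strict Implicit. Unset Printing Implicit Defensive.
Import Order.TTheory GRing.Theory Num.Theory Num.Def numFieldNormedType.Exports.
Local Open Scope classical_set_scope.

(* H is the image of G in the group of transformations of X, i.e. the maps
   [alpha g], with the topology of uniform convergence with respect to U.
   Saturation of U makes every [alpha g] U-uniformly continuous, which gives
   the continuity of the group operations of H and of its action on X;
   boundedness of U makes [g |-> alpha g] continuous.  The balls of the
   uniformity of H indexed by a base B of U form a local base at the unit, and
   their translates by a u-dense family of size ib(G) (obtained from a narrow
   G) form a base of H.  Finally H acts on the Samuel compactification of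
   (X, U), the closure of X in the cube [0, 1]^F over the U-uniformly
   continuous functions F, by precomposition. *)

Definition cover_rel {X : Type} (u : set (set X)) : set (X * X) :=
  [set xy | exists2 V, u V & V xy.1 /\ V xy.2].

Lemma sval_inj (T : Type) (P : T -> Prop) : injective (@sval T P).
Proof. by case=> [x px] [y py] /= exy; exact: eq_exist. Qed.

Lemma cover_rel_sym (X : Type) (u : set (set X)) x y :
  cover_rel u (x, y) -> cover_rel u (y, x).
Proof. by case=> V uV [? ?]; exists V. Qed.

Lemma cover_rel_refines (X : Type) (u v : set (set X)) :
  refines u v -> cover_rel u `<=` cover_rel v.
Proof.
move=> ruv [a b] [V /ruv [W vW VW] [/= Va Vb]].
by exists W => //; split; apply: VW.
Qed.

Lemma ler_dist_min (R : realDomainType) (s t e : R) :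
  (`|minr s e - minr t e| <= `|s - t|)%R.
Proof.
have := ler_norm (s - t); have := ler_norm (t - s); rewrite distrC.
rewrite ler_norml; case: (leP s e) => se; case: (leP t e) => te;
  rewrite ?(min_l se) ?(min_r (ltW se)) ?(min_l te) ?(min_r (ltW te));
  move=> *; apply/andP; split; lra.
Qed.

Section covering_uniformity.
Context (X : topologicalType) (U : set (set (set X))).
Hypothesis hU : covering_uniformity U.

Lemma cover_rel_refl u x : U u -> cover_rel u (x, x).
Proof.
case: hU => _ cov _ _ Uu; have [_ /(_ x) [V uV Vx]] := cov u Uu.
by exists V.
Qed.

Lemma cover_rel_split u : U u -> exists2 w, U w &
  forall a b c, cover_rel w (a, b) -> cover_rel w (b, c) -> cover_rel u (a, c).
Proof.
case: hU => _ _ _ [_ st _] Uu; have [w Uw sw] := st u Uu.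
exists w => // a b c [V1 wV1 [/= V1a V1b]] [V2 wV2 [/= V2b V2c]].
have [W uW sW] := sw V2 wV2; exists W => //; split => /=.
  by apply: sW; exists V1; split => //; exists b.
by apply: sW; exists V2; split => //; exists b.
Qed.

Lemma cover_rel_half : exists half : set (set X) -> set (set X), forall u, U u ->
  U (half u) /\ forall a b c,
    cover_rel (half u) (a, b) -> cover_rel (half u) (b, c) -> cover_rel u (a, c).
Proof.
suff : forall u, exists v, U u -> U v /\ forall a b c,
    cover_rel v (a, b) -> cover_rel v (b, c) -> cover_rel u (a, c).
  by case/choice => f hf; exists f.
move=> u; have [Uu|nUu] := pselect (U u); last by exists set0.
by have [w Uw sw] := cover_rel_split Uu; exists w.
Qed.

Lemma cover_rel_meet u v : U u -> U v -> exists2 w, U w &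
  forall p, cover_rel w p -> cover_rel u p /\ cover_rel v p.
Proof.
case: hU => _ _ _ [mt _ _] Uu Uv; have [w Uw [ru rv]] := mt u v Uu Uv.
by exists w => // p wp; split; apply: cover_rel_refines wp.
Qed.

Lemma cover_rel_subnbhs x (O : set X) : nbhs x O ->
  exists2 u, U u & forall y, cover_rel u (x, y) -> O y.
Proof.
case: hU => _ _ _ [_ _ cp] /cp [u Uu sO]; exists u => // y [V uV [Vx Vy]].
by apply: sO; exists V; split => //; exists x.
Qed.

Lemma nbhs_cover_rel u x : U u -> nbhs x [set y | cover_rel u (x, y)].
Proof.
case: hU => _ cov _ _ Uu; have [oV /(_ x) [V uV Vx]] := cov u Uu.
apply: (@filterS _ _ _ V); first by move=> y Vy; exists V.
by apply: open_nbhs_nbhs; split => //; apply: oV.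
Qed.

Definition cover_ucont (f : X -> X) := forall u, U u -> exists2 w, U w &
  forall a b, cover_rel w (a, b) -> cover_rel u (f a, f b).

Definition cover_space : Type := X.
HB.instance Definition _ := Choice.on cover_space.

Definition cover_entourage : set_system (cover_space * cover_space) :=
  filter_from U cover_rel.

Lemma cover_entourage_filter : Filter cover_entourage.
Proof.
apply: filter_from_filter; first by case: hU => -[u Uu] _ _ _; exists u.
move=> u v Uu Uv; have [w Uw wuv] := cover_rel_meet Uu Uv.
by exists w => // p /wuv.
Qed.

Local Open Scope relation_scope.
Lemma cover_entourage_refl A : cover_entourage A -> diagonal `<=` A.
Proof.
by case=> u Uu DA [a b] /diagonalP /= <-; apply: DA; exact: cover_rel_refl Uu.
Qed.

Lemma cover_entourage_inv A : cover_entourage A -> cover_entourage A^-1.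
Proof. by case=> u Uu DA; exists u => // -[a b] ab; apply/DA/cover_rel_sym. Qed.

Lemma cover_entourage_split A :
  cover_entourage A -> exists2 B, cover_entourage B & B \; B `<=` A.
Proof.
case=> u Uu DA; have [w Uw sw] := cover_rel_split Uu.
exists (cover_rel w); first by exists w.
by case=> a c [b /= h1 h2]; apply: DA; exact: sw h1 h2.
Qed.
Local Close Scope relation_scope.

HB.instance Definition _ := @isUniform.Build cover_space cover_entourage
  cover_entourage_filter cover_entourage_refl cover_entourage_inv
  cover_entourage_split.

Local Open Scope ring_scope.
Local Notation R := Rdefinitions.R.

(* [D] is the extended distance of the gauge pseudometric of the entourage
   [cover_rel u]; it is finite because any two points are at gauge distance
   at most 2. *)
Lemma cover_pseudometric u : U u -> exists D : X -> X -> R,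
  [/\ forall a, D a a = 0,
      forall a b, 0 <= D a b,
      forall a b, D a b = D b a,
      forall a b c, D a c <= D a b + D b c &
  [/\ forall e, 0 < e -> exists2 v, U v &
        forall a b, cover_rel v (a, b) -> D a b < e
    & exists2 eps, 0 < eps & forall a b, D a b < eps -> cover_rel u (a, b)]].
Proof.
move=> Uu; have entE : @entourage cover_space (cover_rel u) by exists u.
pose T := [the pseudoMetricType R of gauge.type entE].
have [eps eps0 epsE] : exists2 eps : R, 0 < eps &
    forall a b : T, ball a eps b -> cover_rel u (a, b).
  have : @entourage T (cover_rel u) by exists 0%N => // p [].
  by rewrite -entourage_ballE => -[e e0 sE]; exists e => // a b /(sE (a, b)).
pose D (a b : X) : R := fine (@edist R T (a, b)).
have DE a b : @edist R T (a, b) = (D a b)%:E.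
  rewrite /D fineK // ge0_fin_numE ?edist_ge0 //.
  apply: (@le_lt_trans _ _ 2%:E); last exact: ltry.
  exact/edist_fin/countable_uniform.countable_uniform_bounded.
exists D; split.
- by move=> a; rewrite /D edist_refl.
- by move=> a b; apply/fine_ge0/edist_ge0.
- by move=> a b; rewrite /D edist_sym.
- by move=> a b c; rewrite -lee_fin EFinD -!DE; exact: edist_triangle.
split; last first.
  exists eps => // a b Dab; apply: epsE.
  by apply: (@edist_lt_ball R T eps (a, b)); rewrite DE lte_fin.
move=> e e0; have e20 : 0 < e / 2 by rewrite divr_gt0.
have : @entourage T [set ab | ball ab.1 (e / 2) ab.2].
  by rewrite -entourage_ballE; exists (e / 2).
move=> /(@gauge.gauge_ent cover_space _ entE) [v Uv sv].
exists v => // a b /sv /= bab; apply: (@le_lt_trans _ _ (e / 2)); last lra.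
by rewrite -lee_fin -DE; exact: edist_fin.
Qed.

Definition cover_ucontR (f : X -> R) := forall e : R, 0 < e ->
  exists2 u, U u & forall a b, cover_rel u (a, b) -> `|f a - f b| < e.

Lemma cover_ucontR_continuous f : cover_ucontR f -> continuous f.
Proof.
move=> uf x A /= /nbhs_ballP [e e0 eA].
have [u Uu hu] := uf e e0.
by apply: filterS (nbhs_cover_rel x Uu) => y /hu fy; apply: eA.
Qed.

Lemma cover_urysohn x u : U u -> exists f : X -> R,
  [/\ cover_ucontR f, forall y, 0 <= f y <= 1, f x = 0 &
      forall y, ~ cover_rel u (x, y) -> f y = 1].
Proof.
move=> /cover_pseudometric[D [D0 Dge0 DC Dtri [Dcont [eps eps0 Dsmall]]]].
exists (fun y => minr (D x y) eps / eps); split.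
- move=> e e0; have [v Uv sv] := Dcont (e * eps) (mulr_gt0 e0 eps0).
  exists v => // a b /sv Dab.
  rewrite -mulrBl normrM normfV (gtr0_norm eps0) ltr_pdivrMr //.
  apply: le_lt_trans (ler_dist_min _ _ _) _.
  apply: le_lt_trans Dab; have := Dtri x a b; have := Dtri x b a.
  by rewrite (DC b a) ler_norml => *; apply/andP; split; lra.
- move=> y; rewrite divr_ge0 ?le_min ?Dge0 ?(ltW eps0) //=.
  by rewrite ler_pdivrMr // mul1r ge_min lexx orbT.
- by rewrite D0 min_l ?ltW // mul0r.
- move=> y nE; rewrite min_r ?divff ?gt_eqF // leNgt; apply/negP => /Dsmall.
  exact: nE.
Qed.

End covering_uniformity.

Section group_laws.
Context (G : Type) (mul : G -> G -> G) (inv : G -> G) (e : G).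
Hypotheses (mulA : forall a b c, mul a (mul b c) = mul (mul a b) c)
  (mul1 : forall a, mul e a = a) (mulV : forall a, mul (inv a) a = e).

Lemma group_mulrV a : mul a (inv a) = e.
Proof.
set b := inv a.
rewrite -[mul a b]mul1 -(mulV b) -mulA [mul b (mul a b)]mulA -/b.
by rewrite /b mulV mul1 mulV.
Qed.

Lemma group_mulr1 a : mul a e = a.
Proof. by rewrite -(mulV a) mulA group_mulrV mul1. Qed.

Lemma group_invK a : inv (inv a) = a.
Proof. by rewrite -[inv (inv a)]group_mulr1 -(mulV a) mulA mulV mul1. Qed.

Lemma group_invM a b : inv (mul a b) = mul (inv b) (inv a).
Proof.
have h : mul (mul (inv b) (inv a)) (mul a b) = e.
  by rewrite -mulA [mul (inv a) _]mulA mulV mul1 mulV.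
by rewrite -[inv (mul a b)]mul1 -h -mulA group_mulrV group_mulr1.
Qed.

Lemma group_inv1 : inv e = e.
Proof. by rewrite -[inv e]group_mulr1 mulV. Qed.

End group_laws.

Lemma prod_topology_cvg (I : Type) (T : topologicalType)
    (F : set_system (prod_topology (fun _ : I => T)))
    (f : prod_topology (fun _ : I => T)) :
  Filter F -> (forall i, (fun g => g i) @ F --> f i) -> F --> f.
Proof.
move=> FF hi; apply/cvg_sup => i A /=.
rewrite (@nbhsE (initial_topology (fun g : prod_topology (fun=> T) => g i))).
case=> O [[B oB <-] Bt] sOA; rewrite nbhs_simpl.
apply: filterS sOA _; apply: (hi i).
by apply: open_nbhs_nbhs; split.
Qed.

Lemma prod_coord_nbhs (I : Type) (R : realFieldType)
    (p : prod_topology (fun _ : I => R)) (i : I) (r : R) :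
  (0 < r)%R ->
  nbhs p [set q : prod_topology (fun _ : I => R) | ball (p i) r (q i)].
Proof.
move=> r0; apply: (@proj_continuous {classic I} (fun _ => R) i p).
exact: nbhsx_ballx.
Qed.

Lemma continuous_prod_nbhs (T1 T2 Y : topologicalType) (f : T1 * T2 -> Y) :
  (forall p A, nbhs (f p) A -> exists P Q, [/\ nbhs p.1 P, nbhs p.2 Q &
     forall a b, P a -> Q b -> A (f (a, b))]) -> continuous f.
Proof.
move=> hf p A /hf [P [Q [nP nQ PQ]]]; exists (P, Q) => //=.
by case=> a b [/= Pa Qb]; apply: PQ.
Qed.

Lemma continuous_sectionl (T1 T2 Y : topologicalType) (f : T1 * T2 -> Y) a :
  continuous f -> continuous (fun b => f (a, b)).
Proof.
move=> cf b; apply: continuous_comp; last exact: cf.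
by apply: cvg_pair => //; exact: cvg_cst.
Qed.

Lemma continuous_sectionr (T1 T2 Y : topologicalType) (f : T1 * T2 -> Y) b :
  continuous f -> continuous (fun a => f (a, b)).
Proof.
move=> cf a; apply: continuous_comp; last exact: cf.
by apply: cvg_pair => //; exact: cvg_cst.
Qed.

Lemma set_type_hausdorff (T : topologicalType) (A : set T) :
  hausdorff_space T -> hausdorff_space (set_type A).
Proof.
move=> hT p q clpq; apply: val_inj; apply: hT => P Q nP nQ.
have [k [Pk Qk]] := clpq _ _ (initial_continuous nP) (initial_continuous nQ).
by exists (sval k).
Qed.

Lemma set_type_compact (T : topologicalType) (A : set T) :
  compact A -> compact [set: set_type A].
Proof.
move=> cA F PF _.
have FA : (sval @ F) A.
  by apply: (@filterE _ F) => k; exact/set_mem/(svalP k).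
have [p [Ap clp]] := cA _ (fmap_proper_filter sval PF) FA.
exists (exist _ p (mem_set Ap)); split => // B C FB.
rewrite (@nbhsE (initial_topology (@set_val T A))).
case=> O [[W oW <-] Wp] sOC.
have FB' : (sval @ F) (sval @` B).
  by apply: (@filterS _ F _ B) FB => k Bk; exists k.
have [_ [[a Ba <-] Wa]] := clp _ _ FB' (open_nbhs_nbhs (conj oW Wp)).
by exists a; split => //; apply: sOC.
Qed.

Lemma uniform_tychonoff (T : uniformType) : hausdorff_space T -> Defs.tychonoff T.
Proof.
move=> hT; split; first exact: hausdorff_accessible.
move=> x B clB nBx.
have := @uniform_completely_regular Rdefinitions.R T x B clB nBx.
move=> /(@uniform_separatorP T Rdefinitions.R) [f [cf _ f0 f1]].
exists f; split => //; split; first by apply: f0; exists x.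
by move=> y By; apply: f1; exists y.
Qed.

Section samuel_compactification.
Context (X : topologicalType) (U : set (set (set X))).
Hypothesis hU : covering_uniformity U.
Hypothesis accX : accessible_space X.
Local Open Scope ring_scope.
Local Notation R := Rdefinitions.R.

Definition ucfun01 : Type :=
  {f : X -> R | cover_ucontR U f /\ forall x, 0 <= f x <= 1}.
HB.instance Definition _ := gen_eqMixin ucfun01.
HB.instance Definition _ := gen_choiceMixin ucfun01.

Definition cube := prod_topology (fun _ : ucfun01 => R).
Definition cube_emb (x : X) : cube := join_product (fun i : ucfun01 => sval i) x.

Lemma ucfun01_continuous (i : ucfun01) : continuous (sval i).
Proof. by apply: (cover_ucontR_continuous hU); case: (svalP i). Qed.

Lemma ucfun01_separates : separate_points_from_closed (fun i : ucfun01 => sval i).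
Proof.
move=> C x clC nCx.
have nO : nbhs x (~` C).
  by apply: open_nbhs_nbhs; split => //; exact: closed_openC.
have [u Uu uO] := cover_rel_subnbhs hU nO.
have [f [uf f01 fx f1]] := cover_urysohn hU x Uu.
exists (exist _ f (conj uf f01)) => /=.
have cl1 : closed [set (1 : R)].
  by apply/accessible_closed_set1/hausdorff_accessible/Rhausdorff.
have sC : f @` C `<=` [set 1] by move=> _ [y Cy <-]; apply: f1 => /uO.
move=> /(closureS sC); rewrite -((closure_id _).1 cl1) fx => /eqP.
by rewrite eq_sym oner_eq0.
Qed.

Lemma cube_emb_continuous : continuous cube_emb.
Proof. exact: join_product_continuous ucfun01_separates ucfun01_continuous. Qed.

Lemma cube_emb_inj : injective cube_emb.
Proof.
by move=> x y /(join_product_inj ucfun01_separates accX); apply; rewrite in_setT.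
Qed.

Definition samuel_set : set cube := closure (range cube_emb).

Lemma cube_hausdorff : hausdorff_space cube.
Proof. by apply: hausdorff_product => _; exact: Rhausdorff. Qed.

Lemma samuel_set_compact : compact samuel_set.
Proof.
pose B := [set p : cube | forall i, `[0, 1]%classic (p i)].
have cB : compact B.
  by have := @tychonoff ucfun01 (fun _ => R) (fun _ => `[0, 1]%classic)
    (fun _ => @segment_compact R 0 1).
apply: (subclosed_compact _ cB); first exact: closed_closure.
rewrite ((closure_id B).1 (compact_closed cube_hausdorff cB)).
apply: closureS => _ [x _ <-] i; rewrite /= in_itv /=.
by case: (svalP i) => _ /(_ x).
Qed.

Definition samuel := set_type samuel_set.

Definition samuel_emb (x : X) : samuel :=
  exist _ (cube_emb x) (mem_set (subset_closure (imageT cube_emb x))).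

Lemma samuel_emb_continuous : continuous samuel_emb.
Proof. exact/continuous_comp_initial/cube_emb_continuous. Qed.

Lemma samuel_emb_inj : injective samuel_emb.
Proof. by move=> x y /(congr1 sval) /cube_emb_inj. Qed.

Lemma samuel_emb_open (O : set X) : open O ->
  exists V : set samuel, open V /\ samuel_emb @` O = range samuel_emb `&` V.
Proof.
move=> oO; have := join_product_open ucfun01_separates oO.
case/open_subspaceP => V oV VE.
exists (sval @^-1` V); split; first by exists V.
apply/seteqP; split.
  move=> _ [x Ox <-]; split; first by exists x.
  have : (cube_emb @` O `&` range cube_emb) (cube_emb x).
    by split; [exists x | exists x].
  by rewrite -VE => -[].
move=> _ [[x _ <-] /= Vx].
have : (V `&` range cube_emb) (cube_emb x) by split => //; exists x.
by rewrite VE => -[[x' Ox' /cube_emb_inj ex'] _]; exists x' => //; rewrite ex'.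
Qed.

Lemma samuel_emb_dense : dense (range samuel_emb).
Proof.
move=> O [p Op] [W oW WO].
have Clp : samuel_set (sval p) by apply/set_mem/(svalP p).
have Wp : W (sval p) by rewrite -WO in Op.
have [_ [[x _ <-] Wx]] := Clp _ (open_nbhs_nbhs (conj oW Wp)).
by exists (samuel_emb x); split; [rewrite -WO | exists x].
Qed.

Lemma samuel_compactification : compactification samuel_emb.
Proof.
split; [exact/set_type_hausdorff/cube_hausdorff |
  exact/set_type_compact/samuel_set_compact | exact: samuel_emb_continuous |
  exact: samuel_emb_inj |].
by split; [exact: samuel_emb_open | exact: samuel_emb_dense].
Qed.

End samuel_compactification.

Arguments cube_emb {X} U x.
Arguments samuel_set {X} U.

Section samuel_action.
Context (X : topologicalType) (U : set (set (set X))).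
Hypothesis hU : covering_uniformity U.
Hypothesis accX : accessible_space X.
Context (M : topologicalType) (mulM : M -> M -> M) (oneM : M) (act : M -> X -> X).
Hypotheses (act1 : forall x, act oneM x = x)
  (actM : forall g h x, act (mulM g h) x = act g (act h x))
  (act_ucont : forall h, cover_ucont U (act h))
  (act_equicont : forall h0 u, U u ->
     nbhs h0 [set h | forall x, cover_rel u (act h0 x, act h x)]).
Local Open Scope ring_scope.
Local Notation R := Rdefinitions.R.
Local Notation ucfun01 := (ucfun01 U).
Local Notation samuel := (samuel U).

Lemma ucfun01_comp_subproof h (i : ucfun01) :
  cover_ucontR U (sval i \o act h) /\ forall x, 0 <= (sval i \o act h) x <= 1.
Proof.
case: (svalP i) => ui i01; split => [e e0|x]; last exact: i01.
have [u Uu hu] := ui e e0; have [w Uw hw] := act_ucont h Uu.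
by exists w => // a b /hw /hu.
Qed.

Definition ucfun01_comp h (i : ucfun01) : ucfun01 :=
  exist _ _ (ucfun01_comp_subproof h i).

Lemma ucfun01_comp1 i : ucfun01_comp oneM i = i.
Proof. by apply: sval_inj; apply: funext => x /=; rewrite act1. Qed.

Lemma ucfun01_compM g h i :
  ucfun01_comp (mulM g h) i = ucfun01_comp h (ucfun01_comp g i).
Proof. by apply: sval_inj; apply: funext => x /=; rewrite actM. Qed.

Definition cube_act h (p : cube U) : cube U := fun i => p (ucfun01_comp h i).

Lemma cube_act_continuous h : continuous (cube_act h).
Proof.
move=> p; apply: prod_topology_cvg => i.
exact: (@proj_continuous ucfun01 (fun _ => R) (ucfun01_comp h i) p).
Qed.

Lemma cube_act_samuel_set h p :
  samuel_set U p -> samuel_set U (cube_act h p).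
Proof.
move=> Clp B /cube_act_continuous /Clp [_ [[x _ <-] Bx]].
by exists (cube_emb U (act h x)); split => //; exists (act h x).
Qed.

Definition samuel_act h (k : samuel) : samuel :=
  exist _ (cube_act h (sval k))
    (mem_set (@cube_act_samuel_set h _ (set_mem (svalP k)))).

Lemma samuel_act_emb h x :
  samuel_act h (samuel_emb U x) = samuel_emb U (act h x).
Proof. exact: val_inj. Qed.

Lemma samuel_act1 k : samuel_act oneM k = k.
Proof.
apply: val_inj; apply: functional_extensionality_dep => i /=.
by rewrite /cube_act ucfun01_comp1.
Qed.

Lemma samuel_actM g h k : samuel_act (mulM g h) k = samuel_act g (samuel_act h k).
Proof.
apply: val_inj; apply: functional_extensionality_dep => i /=.
by rewrite /cube_act ucfun01_compM.
Qed.

(* The coordinate [i] of [samuel_act h k] is compared with that of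
   [samuel_act h0 k0] through a point [cube_emb U x] approximating [k] in the
   two coordinates [ucfun01_comp h0 i] and [ucfun01_comp h i]; the passage
   from [act h0 x] to [act h x] is controlled by [act_equicont]. *)
Lemma samuel_act_continuous :
  continuous (fun z : M * samuel => samuel_act z.1 z.2).
Proof.
apply: continuous_comp_initial => -[h0 k0]; apply: prod_topology_cvg => i /=.
move=> A /nbhs_ballP [e e0 eA].
have e4 : 0 < e / 4 by rewrite divr_gt0.
have e8 : 0 < e / 8 by rewrite divr_gt0.
have [u Uu hu] := (svalP i).1 (e / 4) e4.
set c0 := ucfun01_comp h0 i.
exists ([set h | forall x, cover_rel u (act h0 x, act h x)],
        sval @^-1` [set p : cube U | ball (sval k0 c0) (e / 4) (p c0)]).
  split; first exact: act_equicont.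
  exact/initial_continuous/prod_coord_nbhs.
case=> h k [/= Ph Qk]; apply: eA.
set ch := ucfun01_comp h i; set p := sval k.
have Clp : samuel_set U p by apply/set_mem/(svalP k).
have [_ [[x _ <-] [/= b1 b2]]] := Clp _ (filterI
  (prod_coord_nbhs p c0 e8) (prod_coord_nbhs p ch e8)).
have b3 := hu _ _ (Ph x).
move: Qk b1 b2 b3; rewrite /ball /= /samuel_act !set_valE /= /c0 /ch /p.
rewrite /cube_act /cube_emb /join_product /=.
rewrite !ltr_distl => /andP[q1 q2] /andP[q3 q4] /andP[q5 q6] /andP[q7 q8].
apply/andP; split; lra.
Qed.

Lemma equivariant_compactification :
  exists (K : topologicalType) (j : X -> K) (beta : M -> K -> K),
    [/\ compactification j, is_action mulM oneM beta &
        forall g x, beta g (j x) = j (act g x)].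
Proof.
exists _, (samuel_emb U), samuel_act; split.
- exact: samuel_compactification.
- split; [exact: samuel_act1 | exact: samuel_actM |].
  exact: samuel_act_continuous.
- exact: samuel_act_emb.
Qed.

End samuel_action.

Section transformation_group.
Context (G : topologicalType) (mulG : G -> G -> G) (invG : G -> G) (eG : G).
Context (X : topologicalType) (alpha : G -> X -> X) (U : set (set (set X))).
Hypotheses (hG : is_topgroup mulG invG eG) (hact : is_action mulG eG alpha)
  (hX : Defs.tychonoff X) (hEq : equiuniformity eG alpha U).

Let hU : covering_uniformity U. Proof. by case: hEq. Qed.
Let mulGA : forall a b c, mulG a (mulG b c) = mulG (mulG a b) c.
Proof. by case: hG. Qed.
Let mul1G : forall a, mulG eG a = a. Proof. by case: hG. Qed.
Let mulVG : forall a, mulG (invG a) a = eG. Proof. by case: hG. Qed.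
Let mulGV := group_mulrV mulGA mul1G mulVG.
Let mulG1 := group_mulr1 mulGA mul1G mulVG.

Lemma alpha1 x : alpha eG x = x. Proof. by case: hact. Qed.
Lemma alphaM g h x : alpha (mulG g h) x = alpha g (alpha h x).
Proof. by case: hact. Qed.
Lemma alphaVK g x : alpha g (alpha (invG g) x) = x.
Proof. by rewrite -alphaM mulGV alpha1. Qed.
Lemma alphaKV g x : alpha (invG g) (alpha g x) = x.
Proof. by rewrite -alphaM mulVG alpha1. Qed.

Lemma alpha_saturated g u : U u -> U [set alpha g @` V | V in u].
Proof. by case: hEq => _ sat _; apply: sat. Qed.

Lemma alpha_ucont g : cover_ucont U (alpha g).
Proof.
move=> u Uu; exists [set alpha (invG g) @` V | V in u].
  exact: alpha_saturated.
move=> a b [_ [V uV <-] [/= [a' Va' <-] [b' Vb' <-]]].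
by exists V => //; rewrite !alphaVK.
Qed.

Lemma near1_alpha_close u : U u ->
  nbhs eG [set m | forall y, cover_rel u (y, alpha m y)].
Proof.
move=> Uu; case: hEq => _ _ bd; have [O [v [nO Uv rf]]] := bd u Uu.
have Oe : O eG := nbhs_singleton nO.
apply: filterS nO => m Om y.
have [_ /(_ y) [V vV Vy]] : open_cover v by case: hU => _ cov _ _; exact: cov.
have [W uW sW] := rf (act_set alpha O V) (ex_intro2 _ _ V vV erefl).
exists W => //; split; apply: sW; last by exists m, y.
by exists eG, y; rewrite alpha1.
Qed.

Definition Hgrp : Type := {f : X -> X | exists g, f = alpha g}.
HB.instance Definition _ := gen_eqMixin Hgrp.
HB.instance Definition _ := gen_choiceMixin Hgrp.

Definition rep (h : Hgrp) : G := projT1 (cid (svalP h)).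
Lemma repP h : sval h = alpha (rep h).
Proof. exact: (projT2 (cid (svalP h))). Qed.

Definition sup_ball (u : set (set X)) (h : Hgrp) : set Hgrp :=
  [set k | forall x, cover_rel u (sval h x, sval k x)].

Definition sup_rel u : set (Hgrp * Hgrp) := [set hk | sup_ball u hk.1 hk.2].

Definition sup_entourage := filter_from U sup_rel.

Lemma sup_entourage_filter : Filter sup_entourage.
Proof.
apply: filter_from_filter; first by case: hU => -[u Uu] _ _ _; exists u.
move=> u v Uu Uv; have [w Uw wuv] := cover_rel_meet hU Uu Uv.
by exists w => // hk Dw; split => x; have [] := wuv _ (Dw x).
Qed.

Local Open Scope relation_scope.
Lemma sup_entourage_refl A : sup_entourage A -> diagonal `<=` A.
Proof.
case=> u Uu DA [h k] /diagonalP /= hk; apply: DA; rewrite /sup_rel /= -hk => x.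
exact: cover_rel_refl hU _ _ Uu.
Qed.

Lemma sup_entourage_inv A : sup_entourage A -> sup_entourage A^-1.
Proof.
case=> u Uu DA; exists u => // -[h k] Dhk.
by apply: DA => x; apply/cover_rel_sym/Dhk.
Qed.

Lemma sup_entourage_split A :
  sup_entourage A -> exists2 B, sup_entourage B & B \; B `<=` A.
Proof.
case=> u Uu DA; have [w Uw sw] := cover_rel_split hU Uu.
exists (sup_rel w); first by exists w.
by case=> h k [l /= D1 D2]; apply: DA => x; exact: sw (D1 x) (D2 x).
Qed.
Local Close Scope relation_scope.

HB.instance Definition _ := @isUniform.Build Hgrp sup_entourage
  sup_entourage_filter sup_entourage_refl sup_entourage_inv sup_entourage_split.

(* The uniformity of [Hgrp] depends on [U] and [hEq], which the type [Hgrp]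
   does not mention; [Htop] keeps the structure available outside the
   section. *)
Definition Htop : uniformType := Hgrp.

Lemma nbhs_HgrpP (h : Hgrp) (A : set Hgrp) :
  nbhs h A <-> exists2 u, U u & sup_ball u h `<=` A.
Proof.
rewrite -nbhs_entourageE; split.
  case=> B [u Uu DB] BA; exists u => // k Dk; apply: BA.
  by rewrite /xsection /=; apply/mem_set/DB.
case=> u Uu DA; exists (sup_rel u); first by exists u.
by move=> k /=; rewrite /xsection /= => /set_mem; apply: DA.
Qed.

Lemma nbhs_sup_ball h u : U u -> nbhs h (sup_ball u h).
Proof. by move=> Uu; apply/nbhs_HgrpP; exists u. Qed.

Definition mulH (h k : Hgrp) : Hgrp :=
  exist _ (alpha (mulG (rep h) (rep k))) (ex_intro _ _ erefl).
Definition invH (h : Hgrp) : Hgrp :=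
  exist _ (alpha (invG (rep h))) (ex_intro _ _ erefl).
Definition oneH : Hgrp := exist _ (alpha eG) (ex_intro _ _ erefl).
HB.instance Definition _ := isPointed.Build Hgrp oneH.

Definition phi (g : G) : Hgrp := exist _ (alpha g) (ex_intro _ _ erefl).
Definition gamma (h : Hgrp) (x : X) : X := sval h x.

Lemma sval_mulH h k x : sval (mulH h k) x = sval h (sval k x).
Proof. by rewrite /= alphaM -!repP. Qed.
Lemma sval_invHK h x : sval h (sval (invH h) x) = x.
Proof. by rewrite /= repP alphaVK. Qed.
Lemma sval_invHKV h x : sval (invH h) (sval h x) = x.
Proof. by rewrite /= repP alphaKV. Qed.
Lemma sval_oneH x : sval oneH x = x.
Proof. exact: alpha1. Qed.

Lemma mulHA a b c : mulH a (mulH b c) = mulH (mulH a b) c.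
Proof. by apply: sval_inj; apply: funext => x; rewrite !sval_mulH. Qed.
Lemma mul1H a : mulH oneH a = a.
Proof. by apply: sval_inj; apply: funext => x; rewrite sval_mulH sval_oneH. Qed.
Lemma mulVH a : mulH (invH a) a = oneH.
Proof.
by apply: sval_inj; apply: funext => x; rewrite sval_mulH sval_invHKV sval_oneH.
Qed.

Lemma phiM g h : phi (mulG g h) = mulH (phi g) (phi h).
Proof. by apply: sval_inj; apply: funext => x; rewrite sval_mulH /= alphaM. Qed.
Lemma phi_surj h : exists g, phi g = h.
Proof. by exists (rep h); apply: sval_inj; rewrite /= repP. Qed.

Lemma phi_continuous : continuous phi.
Proof.
move=> g0 A /= /nbhs_HgrpP [u Uu uA].
have cmul : continuous (fun g => mulG g (invG g0)).
  apply: (continuous_sectionr (f := fun p : G * G => mulG p.1 p.2)).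
  by case: hG => _ _ _ [].
have nM1 := near1_alpha_close Uu; rewrite -(mulGV g0) in nM1.
have nM : nbhs g0 [set g | forall y, cover_rel u (y, alpha (mulG g (invG g0)) y)].
  exact: cmul g0 _ nM1.
apply: filterS nM => g Mg; apply: uA => x /=.
by rewrite -[g]mulG1 -(mulVG g0) mulGA alphaM; apply: Mg.
Qed.

Lemma mulH_continuous : continuous (fun p : Hgrp * Hgrp => mulH p.1 p.2).
Proof.
apply: continuous_prod_nbhs => -[h0 k0] A /= /nbhs_HgrpP [u Uu uA].
have [w Uw sw] := cover_rel_split hU Uu.
have [w' Uw' hw'] := alpha_ucont (rep h0) Uw.
exists (sup_ball w h0), (sup_ball w' k0).
split; [exact: nbhs_sup_ball | exact: nbhs_sup_ball |].
move=> h k Ph Qk; apply: uA => x; rewrite !sval_mulH.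
apply: (sw _ (sval h0 (sval k x))); last exact: Ph.
by rewrite repP; apply: hw'.
Qed.

Lemma invH_continuous : continuous invH.
Proof.
move=> h0 A /= /nbhs_HgrpP [u Uu uA].
have [w Uw hw] := alpha_ucont (invG (rep h0)) Uu.
apply: filterS (nbhs_sup_ball h0 Uw) => h Ph; apply: uA => x.
rewrite -{1}(sval_invHK h x).
have := hw _ _ (cover_rel_sym (Ph (sval (invH h) x))).
by rewrite (repP h0) alphaKV.
Qed.

Lemma Hgrp_hausdorff : hausdorff_space Hgrp.
Proof.
move=> p q clpq; apply: sval_inj; apply: funext => x; apply/eqP/negP => /negP pq.
have [O [oO /set_mem Ox /set_mem nOx]] : exists O : set X,
    [/\ open O, sval p x \in O & sval q x \in ~` O].
  by case: hX => acc _; apply: acc.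
have [u Uu uO] := cover_rel_subnbhs hU (open_nbhs_nbhs (conj oO Ox)).
have [w Uw sw] := cover_rel_split hU Uu.
have [k [Pk Qk]] := clpq _ _ (nbhs_sup_ball p Uw) (nbhs_sup_ball q Uw).
by apply: nOx; apply: uO; apply: sw (Pk x) (cover_rel_sym (Qk x)).
Qed.

Lemma Hgrp_topgroup : is_topgroup mulH invH oneH.
Proof.
split; [exact: mulHA | exact: mul1H | exact: mulVH |].
split; [exact: mulH_continuous | exact: invH_continuous |].
exact/uniform_tychonoff/Hgrp_hausdorff.
Qed.

Lemma gamma_continuous : continuous (fun p : Hgrp * X => gamma p.1 p.2).
Proof.
apply: continuous_prod_nbhs => -[h0 x0] A /= /(cover_rel_subnbhs hU) [u Uu uA].
have [w Uw sw] := cover_rel_split hU Uu.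
exists (sup_ball w h0), [set x | cover_rel w (sval h0 x0, sval h0 x)].
split; first exact: nbhs_sup_ball.
  have cact : continuous (alpha (rep h0)).
    apply: (continuous_sectionl (f := fun p : G * X => alpha p.1 p.2)).
    by case: hact.
  by rewrite /= (repP h0); exact: cact x0 _ (nbhs_cover_rel hU _ Uw).
by move=> h x Ph Qx; apply: uA; apply: sw Qx (Ph x).
Qed.

Lemma gamma_action : is_action mulH oneH gamma.
Proof.
split; [exact: sval_oneH | by move=> g h x; rewrite /gamma sval_mulH |].
exact: gamma_continuous.
Qed.

Lemma gamma_equiuniformity : equiuniformity oneH gamma U.
Proof.
split => // [h u Uu|u Uu].
  have -> : gamma h = alpha (rep h) by apply: funext => x; rewrite /gamma repP.
  exact: alpha_saturated.
have [w Uw sw] : exists2 w, U w & star_refines w u.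
  by case: hU => _ _ _ [_ st _]; apply: st.
exists (sup_ball w oneH), w; split => //; first exact: nbhs_sup_ball.
move=> _ [V wV <-]; have [W uW sW] := sw V wV; exists W => //.
move=> z [k [y [Ok Vy ->]]]; apply: sW.
have [V' wV' [/= V'y V'ky]] := Ok y; rewrite alpha1 in V'y.
by exists V'; split => //; exists y.
Qed.

Lemma gamma_G_tychonoff : G_tychonoff mulH invH oneH gamma.
Proof.
split; first by split; [exact: Hgrp_topgroup | exact: hX | exact: gamma_action].
have accX : accessible_space X by case: hX.
apply: (equivariant_compactification hU accX).
- exact: sval_oneH.
- by move=> g h x; rewrite /gamma sval_mulH.
- by move=> h; rewrite /gamma repP; exact: alpha_ucont.
- by move=> h0 u Uu; exact: nbhs_sup_ball.
Qed.

Lemma Hgrp_local_base B : is_ubase U B -> exists L : set (set Hgrp),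
  is_local_base oneH L /\ ((L #<= B)%card \/ countable L).
Proof.
case=> BU Bb; exists [set interior (sup_ball u oneH) | u in B].
split; last by left; exact: card_image_le.
split.
  move=> _ [u Bu <-]; split; first exact: open_interior.
  exact: (nbhs_sup_ball oneH (BU _ Bu)).
move=> N /nbhs_HgrpP [u' Uu' uN]; have [v Bv rv] := Bb u' Uu'.
exists (interior (sup_ball v oneH)); first by exists v.
move=> k /interior_subset kv; apply: uN => x.
exact: (cover_rel_refines rv (kv x)).
Qed.

Lemma Hgrp_narrow (I : Type) (S : set I) : narrow mulG eG S -> narrow mulH oneH S.
Proof.
move=> nG N nN; have [A [cA hA]] := nG _ (phi_continuous nN).
exists (phi @` A); split; first exact: card_le_trans (card_image_le phi A) cA.
move=> h; have [g <-] := phi_surj h; have [a [n [Aa Nn ->]]] := hA g.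
by exists (phi a), (phi n); split; [exists a | | rewrite phiM].
Qed.

Lemma narrow_sup_net (I : Type) (S : set I) : narrow mulG eG S ->
  exists net : set (set X) -> I -> Hgrp, forall u, U u ->
    forall h, exists2 s, S s & sup_ball u (net u s) h.
Proof.
move=> nG; suff : forall u, exists net : I -> Hgrp, U u ->
    forall h, exists2 s, S s & sup_ball u (net s) h.
  by case/choice => net hnet; exists net.
move=> u; have [Uu|nUu] := pselect (U u); last by exists (fun=> oneH).
have cinv : continuous invG by case: hG => _ _ _ [].
have nV1 := near1_alpha_close Uu; rewrite -(group_inv1 mulGA mul1G mulVG) in nV1.
have [A [cA hA]] := nG _ (cinv eG _ nV1).
have [net hnet] := @pcard_surjP Hgrp I _ S
  (card_le_trans (card_image_le (fun a => phi (invG a)) A) cA).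
exists net => _ h; have [a [n [Aa Nn ea]]] := hA (invG (rep h)).
have [s Ss es] := hnet _ (ex_intro2 _ _ a Aa erefl).
exists s => // x; rewrite es /= (repP h).
have -> : rep h = mulG (invG n) (invG a).
  by rewrite -(group_invM mulGA mul1G mulVG) -ea (group_invK mulGA mul1G mulVG).
by rewrite alphaM; apply: Nn.
Qed.

Lemma Hgrp_top_base B : is_ubase U B -> forall (I : Type) (S : set I),
  narrow mulG eG S -> exists BB : set (set Hgrp),
    is_top_base BB /\ (BB #<= B `*` S)%card.
Proof.
case=> BU Bb I S /narrow_sup_net [net hnet].
have [half hhalf] := cover_rel_half hU.
pose O (p : set (set X) * I) :=
  interior (sup_ball (half p.1) (net (half (half p.1)) p.2)).
exists (O @` (B `*` S)); split; last exact: card_image_le.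
split; first by move=> _ [p _ <-]; exact: open_interior.
move=> W oW h Wh.
have /nbhs_HgrpP [u' Uu' u'W] : nbhs h W by apply: open_nbhs_nbhs.
have [u Bu ru] := Bb u' Uu'; have Uu := BU _ Bu.
have [Uv sv] := hhalf u Uu; have [Uw sw] := hhalf _ Uv.
have [s Ss hs] := hnet _ Uw h.
exists (O (u, s)); first by exists (u, s).
split.
  apply/nbhs_HgrpP; exists (half (half u)) => // k hk x.
  exact: sw (hs x) (hk x).
move=> k /interior_subset kv; apply: u'W => x; apply: (cover_rel_refines ru).
apply: sv (kv x); apply/cover_rel_sym/sw; first exact: hs.
exact: cover_rel_refl hU _ _ Uw.
Qed.

End transformation_group.

Theorem theorem3p11 (G : topologicalType) (mulG : G -> G -> G) (invG : G -> G)
  (eG : G) (X : topologicalType) (alpha : G -> X -> X) (U : set (set (set X))) :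
  G_tychonoff mulG invG eG alpha ->
  equiuniformity eG alpha U ->
  exists (H : topologicalType) (mulH : H -> H -> H) (invH : H -> H) (eH : H)
         (gamma : H -> X -> X) (phi : G -> H),
    [/\ G_tychonoff mulH invH eH gamma,
        equiuniformity eH gamma U,
        (* chi(H) <= w(U) *)
        (forall B, is_ubase U B -> exists L : set (set H),
           is_local_base eH L /\ ((L #<= B)%card \/ countable L)),
        (* ib(H) <= ib(G) *)
        (forall (I : Type) (S : set I), infinite_set S ->
           narrow mulG eG S -> narrow mulH eH S) &
        (* w(H) <= w(U) . ib(G) *)
        (forall B, is_ubase U B -> forall (I : Type) (S : set I), infinite_set S ->
           narrow mulG eG S -> exists BB : set (set H),
             is_top_base BB /\ (BB #<= B `*` S)%card)] /\
        (* (phi, id) equivariant pair, phi a continuous epimorphism *)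
        [/\ continuous phi,
            (forall g h, phi (mulG g h) = mulH (phi g) (phi h)),
            (forall h, exists g, phi g = h) &
            (forall g x, alpha g x = gamma (phi g) x)].
Proof.
move=> [[hG hX hact] _] hEq.
exists (Htop hEq), (@mulH _ mulG _ alpha), (@invH _ invG _ alpha),
  (oneH eG alpha), (@gamma _ _ alpha), (phi alpha).
split; split.
- exact: gamma_G_tychonoff hG hact hX hEq.
- exact: gamma_equiuniformity hact hEq.
- exact: Hgrp_local_base hEq.
- by move=> I S _; exact: (Hgrp_narrow hG hact (hEq := hEq)).
- by move=> B bB I S _; exact: (Hgrp_top_base hG hact hEq bB).
- exact: (phi_continuous hG hact (hEq := hEq)).
- exact: phiM hact.
- exact: phi_surj.
- by [].
Qed.
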